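(* Let $G$ be a graph and let $0<d<1<u$ be parameters. Assume that the minimum degree satisfies $\delta(G[S])\le d(|S|-1)$ for every vertex subset $S\subseteq V(G)$ with $|S|\ge u$. Then for every vertex subset $W\subseteq V(G)$ with $|W|\ge u$, $$\alpha(G[W])\ge-\log_{(1-d)(1-1/u)}\big(|W|/u\big).$$
   Context: For a graph $H$, $\delta(H)$ denotes its minimum degree and $\alpha(H)$ the size of a largest independent set; $G[S]$ denotes the subgraph of $G$ induced by $S$. *)

(* finite simple graphs as symmetric irreflexive relations on a
   finType; reals via MathComp-Analysis (R : realType, natural log ln). *)
From mathcomp Require Import all_boot all_order all_algebra.
From mathcomp Require Import all_classical all_reals all_analysis.
Set Implicit Arguments. Unset Strict Implicit. Unset Printing Implicit Defensive.

Section Graph.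
Variable T : finType.
Variable e : rel T.

Definition nbr_in (S : {set T}) (v : T) : {set T} := [set w in S | e v w].

(* minimum degree of the induced subgraph G[S]
   (for S empty this returns #|T|; irrelevant below since |S| >= u > 1) *)
Definition mindeg (S : {set T}) : nat :=
  \big[minn/#|T|]_(v in S) #|nbr_in S v|.

Definition independent (I : {set T}) : bool :=
  [forall x in I, forall y in I, ~~ e x y].

Definition alpha (W : {set T}) : nat :=
  \max_(I in powerset W | independent I) #|I|.
End Graph.

(* Greedy argument: put a vertex v of minimum degree of G[W] into the independent
   set and recurse into its non-neighbours W'.  While |W| >= u the hypothesis gives
   |W'| >= (1 - d)(|W| - 1) >= q |W| with q = (1 - d)(1 - 1/u), and alpha(W) exceeds
   alpha(W').  Induction on |W| yields |W| q^alpha(W) <= u, which is the claim after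
   taking logarithms to the base q < 1. *)

From mathcomp Require Import all_boot all_order all_algebra.
From mathcomp Require Import all_classical all_reals all_analysis.
From mathcomp Require Import ring lra.
Set Implicit Arguments. Unset Strict Implicit. Unset Printing Implicit Defensive.
(* Undo the shadowing of [subsetP], [set0], [sub0set] by classical_sets. *)
Import mathcomp.boot.fintype mathcomp.boot.finset.
Import Order.TTheory GRing.Theory Num.Theory.

Section InducedSubgraphs.
Variables (T : finType) (e : rel T).

Definition nonnbr_in (S : {set T}) (v : T) : {set T} :=
  [set w in S | (w != v) && ~~ e v w].

Lemma nonnbr_in_proper (S : {set T}) (v : T) : v \in S -> nonnbr_in S v \proper S.
Proof.
move=> vS; apply/properP; split; last by exists v; rewrite // inE eqxx andbF.
by apply/subsetP => w; rewrite inE => /andP[].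
Qed.

Lemma card_nonnbr_in (S : {set T}) (v : T) : v \in S ->
  #|S| <= #|nonnbr_in S v| + #|nbr_in e S v| + 1.
Proof.
move=> vS.
have sub : S \subset nonnbr_in S v :|: (v |: nbr_in e S v).
  apply/subsetP => w wS; rewrite !inE wS /=.
  by case: (w =P v) => //= _; case: (e v w).
apply: (leq_trans (subset_leq_card sub)); rewrite -addnA.
apply: (leq_trans (leq_card_setU _ _)); rewrite leq_add2l cardsU1 addnC.
by rewrite leq_add2l leq_b1.
Qed.

Lemma mindeg_attained (S : {set T}) (v0 : T) : v0 \in S ->
  exists2 v, v \in S & #|nbr_in e S v| <= mindeg e S.
Proof.
move=> v0S; rewrite /mindeg.
apply: (big_ind (fun m => exists2 v, v \in S & #|nbr_in e S v| <= m)).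
- by exists v0 => //; apply: max_card.
- move=> m n [v vS le_vm] [w wS le_wn].
  by case: leqP => _; [exists v | exists w].
- by move=> v vS; exists v.
Qed.

Lemma independent0 : independent e set0.
Proof. by apply/forallP => x; rewrite inE. Qed.

Lemma independent_le_alpha (W I : {set T}) :
  I \subset W -> independent e I -> #|I| <= alpha e W.
Proof.
move=> IW indI; apply: (leq_bigmax_cond (P := fun J => _ && _)).
by rewrite powersetE IW.
Qed.

Lemma alpha_attained (W : {set T}) :
  exists2 I : {set T}, I \subset W /\ independent e I & alpha e W = #|I|.
Proof.
have [|I] := eq_bigmax_cond (fun I : {set T} => #|I|)
               (A := [pred I : {set T} | (I \in powerset W) && independent e I]).
  by apply/card_gt0P; exists set0; rewrite inE powersetE sub0set independent0.
rewrite inE powersetE => /andP[IW indI] max_I.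
by exists I => //; rewrite -max_I.
Qed.

Hypotheses (e_sym : symmetric e) (e_irr : irreflexive e).

Lemma independentU1 (v : T) (I : {set T}) :
  {in I, forall w, ~~ e v w} -> independent e I -> independent e (v |: I).
Proof.
move=> vI /forallP indI.
apply/forallP => x; apply/implyP; rewrite in_setU1 => /predU1P[-> | xI];
  apply/forallP => y; apply/implyP; rewrite in_setU1 => /predU1P[-> | yI].
- by rewrite e_irr.
- exact: vI.
- by rewrite e_sym; apply: vI.
- by have /implyP/(_ xI)/forallP/(_ y)/implyP := indI x; apply.
Qed.

Lemma alpha_nonnbr_in (W : {set T}) (v : T) : v \in W ->
  (alpha e (nonnbr_in W v)).+1 <= alpha e W.
Proof.
move=> vW; have [I [IW' indI] ->] := alpha_attained (nonnbr_in W v).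
have vI : v \notin I by apply: contraTN vW => /(subsetP IW'); rewrite inE eqxx andbF.
have <- : #|v |: I| = #|I|.+1 by rewrite cardsU1 vI.
apply: independent_le_alpha.
  rewrite subUset sub1set vW; apply: subset_trans IW' _.
  by apply/subsetP => w; rewrite inE => /andP[].
apply: independentU1 indI => w /(subsetP IW').
by rewrite inE => /and3P[].
Qed.

End InducedSubgraphs.

Local Open Scope ring_scope.

Lemma shrink_factor_bounds (R : realFieldType) (d u : R) :
  0 < d -> d < 1 -> 1 < u -> 0 < (1 - d) * (1 - u^-1) < 1.
Proof.
move=> d_gt0 d_lt1 u_gt1.
have u_inv_gt0 : 0 < u^-1 by rewrite invr_gt0; lra.
have u_inv_lt1 : u^-1 < 1 by rewrite invf_lt1 //; lra.
apply/andP; split; nra.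
Qed.

Lemma shrink_factor_le (R : realFieldType) (d u N D N' : R) :
  d <= 1 -> 1 < u -> u <= N -> D <= d * (N - 1) -> N <= N' + D + 1 ->
  (1 - d) * (1 - u^-1) * N <= N'.
Proof.
move=> d_le1 u_gt1 uN DN NN'.
have N_div_u_ge1 : 1 <= N / u by rewrite ler_pdivlMr ?mul1r //; lra.
have -> : (1 - d) * (1 - u^-1) * N = (1 - d) * (N - N / u) by ring.
have : (1 - d) * (N - N / u) <= (1 - d) * (N - 1).
  by rewrite ler_wpM2l ?lerB //; lra.
nra.
Qed.

Lemma neg_log_le_of_mulX_le1 (R : realType) (q x : R) (n : nat) :
  0 < q < 1 -> 0 < x -> x * q ^+ n <= 1 -> - (ln x / ln q) <= n%:R.
Proof.
move=> q01 x_gt0 le1; have /andP[q_gt0 _] := q01.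
have ln_q_lt0 : ln q < 0 by apply: ln_lt0.
have : ln (x * q ^+ n) <= 0.
  by rewrite -ln1 ler_ln ?posrE // mulr_gt0 // exprn_gt0.
rewrite lnM ?posrE ?exprn_gt0 // lnXn // -mulr_natl => h.
rewrite -mulNr ler_ndivrMr //; lra.
Qed.

Section AlphaLowerBound.
Variables (R : realFieldType) (T : finType) (e : rel T) (d u : R).
Hypotheses (e_sym : symmetric e) (e_irr : irreflexive e).
Hypotheses (d_gt0 : 0 < d) (d_lt1 : d < 1) (u_gt1 : 1 < u).
Hypothesis mindeg_sparse : forall S : {set T}, u <= #|S|%:R ->
  (mindeg e S)%:R <= d * (#|S|%:R - 1).

Let q := (1 - d) * (1 - u^-1).

Lemma card_mulX_alpha_le (W : {set T}) : #|W|%:R * q ^+ alpha e W <= u.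
Proof.
have /andP[/ltW q_ge0 /ltW q_le1] := shrink_factor_bounds d_gt0 d_lt1 u_gt1.
have u_gt0 : 0 < u := lt_trans ltr01 u_gt1.
have [n lt_W_n] := ubnP #|W|; elim: n W lt_W_n => // n IH W /ltnSE le_W_n.
have [W_ge_u | W_lt_u] := lerP u #|W|%:R; last first.
  by apply: le_trans (ltW W_lt_u); rewrite ler_piMr // exprn_ile1.
have [v0 v0W] : exists v0, v0 \in W.
  by apply/card_gt0P; rewrite -(ltr_nat R); apply: lt_le_trans W_ge_u.
have [v vW deg_v] := mindeg_attained e v0W.
set W' := nonnbr_in e W v.
have IH' : #|W'|%:R * q ^+ alpha e W' <= u.
  by apply: IH; apply: leq_trans le_W_n; apply: proper_card; apply: nonnbr_in_proper.
have shrink : q * #|W|%:R <= #|W'|%:R.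
  apply: (shrink_factor_le (D := #|nbr_in e W v|%:R) (ltW d_lt1) u_gt1 W_ge_u).
    by apply: le_trans _ (mindeg_sparse W_ge_u); rewrite ler_nat.
  by rewrite -natrD natr1 ler_nat -addn1; apply: card_nonnbr_in.
apply: le_trans IH'; apply: (@le_trans _ _ (#|W|%:R * q ^+ (alpha e W').+1)).
  by rewrite ler_wpM2l // ler_wiXn2l // alpha_nonnbr_in.
by rewrite exprS mulrA [_ * q]mulrC ler_wpM2r // exprn_ge0.
Qed.

End AlphaLowerBound.

Theorem lemma6 (R : realType) (T : finType) (e : rel T) (d u : R) :
  symmetric e -> irreflexive e ->
  0 < d -> d < 1 -> 1 < u ->
  (forall S : {set T}, u <= (#|S|)%:R ->
     ((mindeg e S)%:R : R) <= d * ((#|S|)%:R - 1)) ->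
  forall W : {set T}, u <= (#|W|)%:R ->
    - (ln ((#|W|)%:R / u) / ln ((1 - d) * (1 - u^-1))) <= ((alpha e W)%:R : R).
Proof.
move=> e_sym e_irr d_gt0 d_lt1 u_gt1 mindeg_sparse W W_ge_u.
have u_gt0 : 0 < u := lt_trans ltr01 u_gt1.
apply: neg_log_le_of_mulX_le1; first exact: shrink_factor_bounds.
  by apply: divr_gt0 => //; apply: lt_le_trans W_ge_u.
rewrite mulrAC ler_pdivrMr // mul1r.
exact: card_mulX_alpha_le.
Qed.
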